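(* Let $k\equiv\pm1,\pm3\pmod{10}$. Then $\operatorname{Ker}\nu_{G^k}=\{M=\begin{pmatrix} a&b\\ c&d\end{pmatrix}\in\Gamma_{\theta,5}: b,c\in5\mathbb{Z}\text{ and }\tfrac b5\equiv\tfrac c5\pmod5\}$; in particular $\operatorname{Ker}\nu_{G^k}=\operatorname{Ker}\nu_{F^k}$.
   Context: $\Gamma_{\theta,5}=\{M\in SL(2,\mathbb{Z}): M\equiv\pm\begin{pmatrix}1&0\\0&1\end{pmatrix}\text{ or }\pm\begin{pmatrix}0&-1\\1&0\end{pmatrix}\pmod 5\}$. For $M=\begin{pmatrix} a&b\\ c&d\end{pmatrix}\in\Gamma_{\theta,5}$ define $g(M)=\frac{6b}{5}+\frac{2ab}{5}+\frac{2cd}{5}$ if $M\equiv I$, $\frac{24b}{5}+\frac{2ab}{5}+\frac{2cd}{5}$ if $M\equiv -I$, $5+\frac{6d}{5}+\frac{2ab}{5}+\frac{2cd}{5}$ if $M\equiv\begin{pmatrix}0&-1\\1&0\end{pmatrix}$, $5-\frac{6d}{5}+\frac{2ab}{5}+\frac{2cd}{5}$ if $M\equiv\begin{pmatrix}0&1\\-1&0\end{pmatrix}$ (all mod 5), and $f(M)$ by the same case split with values $\frac{4b}{5}+\frac{8ab}{5}+\frac{8cd}{5}$, $\frac{6b}{5}+\frac{8ab}{5}+\frac{8cd}{5}$, $5+\frac{4d}{5}+\frac{8ab}{5}+\frac{8cd}{5}$, $5-\frac{4d}{5}+\frac{8ab}{5}+\frac{8cd}{5}$ respectively. For $k\in\mathbb{Z}$,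 $\nu_{G^k}(M)=\exp(\frac{\pi ik}{5}g(M))$ and $\nu_{F^k}(M)=\exp(\frac{\pi ik}{5}f(M))$; these are the multiplier systems (weight $2k$) of $G^k$ and $F^k$, where $G=\eta^6/\big(\theta\begin{bmatrix}3/5\\3/5\end{bmatrix}\theta\begin{bmatrix}3/5\\7/5\end{bmatrix}\big)$, $F=\eta^6/\big(\theta\begin{bmatrix}1/5\\1/5\end{bmatrix}\theta\begin{bmatrix}1/5\\9/5\end{bmatrix}\big)$, with theta constants $\theta\begin{bmatrix}\epsilon\\ \epsilon'\end{bmatrix}=\sum_{n\in\mathbb{Z}}\exp(2\pi i[\frac12(n+\frac\epsilon2)^2\tau+(n+\frac\epsilon2)\frac{\epsilon'}2])$ and $\eta(\tau)=q^{1/24}\prod_{n\ge1}(1-q^n)$. Kernels are $\{M\in\Gamma_{\theta,5}:\nu(M)=1\}$. *)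

From Stdlib Require Import Reals ZArith Bool.
From Coquelicot Require Import Coquelicot.
Open Scope R_scope.

Record Mat := mkMat { ma : Z; mb : Z; mc : Z; md : Z }.

Definition cong5 (x y : Z) : bool := Z.eqb (Z.modulo x 5) (Z.modulo y 5).

Definition isI (M : Mat) : bool :=
  cong5 (ma M) 1 && cong5 (mb M) 0 && cong5 (mc M) 0 && cong5 (md M) 1.
Definition isNegI (M : Mat) : bool :=
  cong5 (ma M) (-1) && cong5 (mb M) 0 && cong5 (mc M) 0 && cong5 (md M) (-1).
Definition isS (M : Mat) : bool :=
  cong5 (ma M) 0 && cong5 (mb M) (-1) && cong5 (mc M) 1 && cong5 (md M) 0.
Definition isNegS (M : Mat) : bool :=
  cong5 (ma M) 0 && cong5 (mb M) 1 && cong5 (mc M) (-1) && cong5 (md M) 0.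

Definition inGamma (M : Mat) : Prop :=
  (ma M * md M - mb M * mc M = 1)%Z /\
  (isI M || isNegI M || isS M || isNegS M) = true.

Definition g (M : Mat) : R :=
  let a := IZR (ma M) in let b := IZR (mb M) in
  let c := IZR (mc M) in let d := IZR (md M) in
  if isI M then 6*b/5 + 2*a*b/5 + 2*c*d/5
  else if isNegI M then 24*b/5 + 2*a*b/5 + 2*c*d/5
  else if isS M then 5 + 6*d/5 + 2*a*b/5 + 2*c*d/5
  else if isNegS M then 5 - 6*d/5 + 2*a*b/5 + 2*c*d/5
  else 0.

Definition f (M : Mat) : R :=
  let a := IZR (ma M) in let b := IZR (mb M) in
  let c := IZR (mc M) in let d := IZR (md M) in
  if isI M then 4*b/5 + 8*a*b/5 + 8*c*d/5
  else if isNegI M then 6*b/5 + 8*a*b/5 + 8*c*d/5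
  else if isS M then 5 + 4*d/5 + 8*a*b/5 + 8*c*d/5
  else if isNegS M then 5 - 4*d/5 + 8*a*b/5 + 8*c*d/5
  else 0.

Definition cexpi (t : R) : C := (cos t, sin t).

Definition nu (h : Mat -> R) (k : Z) (M : Mat) : C := cexpi (PI * IZR k * h M / 5).
Definition nuG (k : Z) := nu g k.
Definition nuF (k : Z) := nu f k.

Definition Ker (nuk : Mat -> C) (M : Mat) : Prop := inGamma M /\ nuk M = RtoC 1.

(** For a matrix congruent to [±I] modulo 5, write [b = 5 b'] and [c = 5 c']: both
    multipliers have the form [exp(π i k N / 25)] with an integer [N] equal, modulo 50,
    to [10 (A b' + B c')] where [A + B ≡ 0] and [A ≢ 0 (mod 5)].  For [k] prime to 10
    the multiplier is trivial iff [50 | N], i.e. iff [b' ≡ c' (mod 5)].  For a matrix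
    congruent to [±S] the integer [N] is odd, so the multiplier is never trivial,
    matching the fact that [b] is then prime to 5. *)

From Pilot Require Import Defs.
From Stdlib Require Import Reals ZArith Znumtheory Bool Lia Lra.
From Coquelicot Require Import Coquelicot.

Lemma cos_2PI_mul_IZR (n : Z) : cos (2 * (IZR n * PI)) = 1.
Proof.
  rewrite cos_2a_sin, sin_eq_0_1 by (exists n; reflexivity).
  ring.
Qed.

Lemma cexpi_eq_1 (t : R) : cexpi t = RtoC 1 <-> exists n : Z, t = 2 * (IZR n * PI).
Proof.
  unfold cexpi, RtoC; split.
  - intros Ht; injection Ht as Hcos Hsin.
    destruct (sin_eq_0_0 t Hsin) as [j ->].
    destruct (Z.Even_or_Odd j) as [[n ->] | [n ->]].
    + exists n; rewrite mult_IZR; ring.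
    + exfalso.
      rewrite plus_IZR, mult_IZR in Hcos.
      replace ((2 * IZR n + 1) * PI) with (2 * (IZR n * PI) + PI) in Hcos by ring.
      rewrite neg_cos, cos_2PI_mul_IZR in Hcos; lra.
  - intros [n ->].
    rewrite cos_2PI_mul_IZR, sin_eq_0_1; [reflexivity|].
    exists (2 * n)%Z; rewrite mult_IZR; ring.
Qed.

Lemma nu_eq_1 (h : Mat -> R) (k : Z) (M : Mat) (N : Z) :
  h M = IZR N / 5 -> nu h k M = RtoC 1 <-> (50 | k * N)%Z.
Proof.
  intros HN; unfold nu; rewrite cexpi_eq_1, HN.
  assert (PI_pos := PI_RGT_0).
  split; intros [n Hn]; exists n.
  - apply eq_IZR; rewrite !mult_IZR.
    apply (Rmult_eq_reg_l (PI / 25)); [|apply Rgt_not_eq; lra].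
    replace (PI / 25 * (IZR k * IZR N)) with (PI * IZR k * (IZR N / 5) / 5) by field.
    rewrite Hn; field.
  - replace (PI * IZR k * (IZR N / 5) / 5) with (PI / 25 * IZR (k * N))
      by (rewrite mult_IZR; field).
    rewrite Hn, mult_IZR; field.
Qed.

Open Scope Z_scope.

Lemma prime_5 : prime 5.
Proof.
  apply prime_intro; [lia|].
  intros n Hn; apply Zgcd_1_rel_prime.
  assert (n = 1 \/ n = 2 \/ n = 3 \/ n = 4) as [-> | [-> | [-> | ->]]] by lia;
    reflexivity.
Qed.

Lemma rel_prime_50 (k : Z) :
  k mod 10 = 1 \/ k mod 10 = 9 \/ k mod 10 = 3 \/ k mod 10 = 7 -> rel_prime 50 k.
Proof.
  intros hk.
  assert (odd_k : ~ (2 | k)).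
  { intros [q ->]; pose proof (Z.div_mod (q * 2) 10); pose proof (Z.mod_pos_bound (q * 2) 10); lia. }
  assert (prime_to_5 : ~ (5 | k)).
  { intros [q ->]; pose proof (Z.div_mod (q * 5) 10); pose proof (Z.mod_pos_bound (q * 5) 10); lia. }
  assert (r2 := rel_prime_sym _ _ (prime_rel_prime 2 prime_2 k odd_k)).
  assert (r5 := rel_prime_sym _ _ (prime_rel_prime 5 prime_5 k prime_to_5)).
  apply rel_prime_sym; change 50 with (2 * (5 * 5)).
  repeat apply rel_prime_mult; assumption.
Qed.

Lemma divide_mul_rel_prime (n k N : Z) : rel_prime n k -> (n | k * N) <-> (n | N).
Proof.
  intros Hk; split.
  - intros H; exact (Gauss n k N H Hk).
  - apply Z.divide_mul_r.
Qed.

Lemma divide_5_lincomb (A B x y : Z) :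
  (5 | A + B) -> ~ (5 | A) -> (5 | A * x + B * y) <-> x mod 5 = y mod 5.
Proof.
  intros HAB HA.
  rewrite Z.cong_iff_0, Z.mod_divide by lia.
  replace (A * x + B * y) with ((A + B) * y + A * (x - y)) by ring.
  split; intros H.
  - apply Z.divide_add_cancel_r in H; [|now apply Z.divide_mul_l].
    now destruct (prime_mult 5 prime_5 A (x - y) H).
  - now apply Z.divide_add_r; [apply Z.divide_mul_l | apply Z.divide_mul_r].
Qed.

Lemma divide_50_mul_10 (x q : Z) : (50 | 10 * x + 50 * q) <-> (5 | x).
Proof.
  rewrite <- (Z.mul_divide_cancel_l 5 x 10) by lia.
  replace (10 * x + 50 * q) with (50 * q + 10 * x) by ring.
  split; intros H.
  - exact (Z.divide_add_cancel_r _ _ _ (Z.divide_factor_l 50 q) H).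
  - exact (Z.divide_add_r _ _ _ (Z.divide_factor_l 50 q) H).
Qed.

Lemma mod_5_eq_decomp (a e : Z) : a mod 5 = e mod 5 -> exists a', a = 5 * a' + e.
Proof.
  rewrite Z.cong_iff_0, Z.mod_divide by lia.
  intros [a' Ha']; exists a'; lia.
Qed.

Definition kernel_cond (M : Mat) : Prop :=
  (5 | mb M) /\ (5 | mc M) /\ (mb M / 5) mod 5 = (mc M / 5) mod 5.

Lemma divide_50_scalar_case (s r e a b c d : Z) :
  (5 | s + 2 * (r * e)) -> ~ (5 | r * e) ->
  a mod 5 = e mod 5 -> b mod 5 = 0 mod 5 -> c mod 5 = 0 mod 5 -> d mod 5 = e mod 5 ->
  (50 | 2 * s * b + 2 * r * (a * b + c * d)) <->
  (5 | b) /\ (5 | c) /\ (b / 5) mod 5 = (c / 5) mod 5.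
Proof.
  intros Hsum Hre Ha Hb Hc Hd.
  destruct (mod_5_eq_decomp a e Ha) as [a' ->].
  destruct (mod_5_eq_decomp b 0 Hb) as [b' ->].
  destruct (mod_5_eq_decomp c 0 Hc) as [c' ->].
  destruct (mod_5_eq_decomp d e Hd) as [d' ->].
  replace (2 * s * (5 * b' + 0) + 2 * r * ((5 * a' + e) * (5 * b' + 0) + (5 * c' + 0) * (5 * d' + e)))
    with (10 * ((s + r * e) * b' + (r * e) * c') + 50 * (r * (a' * b' + c' * d'))) by ring.
  replace (5 * b' + 0) with (b' * 5) by ring; replace (5 * c' + 0) with (c' * 5) by ring.
  rewrite !Z.div_mul by lia.
  rewrite divide_50_mul_10, divide_5_lincomb.
  - split; [intros H; repeat split; auto; apply Z.divide_factor_r | tauto].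
  - now replace (s + r * e + r * e) with (s + 2 * (r * e)) by ring.
  - intros HA; apply Hre.
    replace (r * e) with (s + 2 * (r * e) - (s + r * e)) by ring.
    now apply Z.divide_sub_r.
Qed.

Lemma divide_50_rotation_case (t e b c : Z) :
  ~ (5 | e) -> b mod 5 = e mod 5 ->
  (50 | 25 + 2 * t) <-> (5 | b) /\ (5 | c) /\ (b / 5) mod 5 = (c / 5) mod 5.
Proof.
  intros He Hb; split.
  - intros [q Hq]; lia.
  - intros [Hb5 _]; exfalso; apply He.
    destruct (mod_5_eq_decomp e b (eq_sym Hb)) as [q ->].
    destruct Hb5 as [p ->]; exists (q + p); ring.
Qed.

Lemma cong5_and4 (x1 y1 x2 y2 x3 y3 x4 y4 : Z) :
  cong5 x1 y1 && cong5 x2 y2 && cong5 x3 y3 && cong5 x4 y4 = true ->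
  x1 mod 5 = y1 mod 5 /\ x2 mod 5 = y2 mod 5 /\ x3 mod 5 = y3 mod 5 /\ x4 mod 5 = y4 mod 5.
Proof.
  unfold cong5; rewrite !andb_true_iff, !Z.eqb_eq; tauto.
Qed.

Definition multiplier_numerator (sI sN r u : Z) (M : Mat) : Z :=
  let a := ma M in let b := mb M in let c := mc M in let d := md M in
  if isI M then 2 * sI * b + 2 * r * (a * b + c * d)
  else if isNegI M then 2 * sN * b + 2 * r * (a * b + c * d)
  else if isS M then 25 + 2 * (u * d + r * (a * b + c * d))
  else if isNegS M then 25 + 2 * (r * (a * b + c * d) - u * d)
  else 0.

Lemma multiplier_numerator_divide_50 (sI sN r u : Z) (M : Mat) :
  (5 | sI + 2 * r) -> (5 | sN - 2 * r) -> ~ (5 | r) -> inGamma M ->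
  (50 | multiplier_numerator sI sN r u M) <-> kernel_cond M.
Proof.
  intros HsI HsN Hr [_ HM]; unfold multiplier_numerator, kernel_cond; cbv zeta.
  assert (not_5_1 : ~ (5 | 1)) by (intros [q Hq]; lia).
  assert (not_5_m1 : ~ (5 | -1)) by (intros [q Hq]; lia).
  destruct (isI M) eqn:HI; [|destruct (isNegI M) eqn:HN;
    [|destruct (isS M) eqn:HS; [|destruct (isNegS M) eqn:HS']]].
  - destruct (cong5_and4 _ _ _ _ _ _ _ _ HI) as (Ha & Hb & Hc & Hd).
    apply (divide_50_scalar_case sI r 1); rewrite ?Z.mul_1_r; assumption.
  - destruct (cong5_and4 _ _ _ _ _ _ _ _ HN) as (Ha & Hb & Hc & Hd).
    apply (divide_50_scalar_case sN r (-1)); try assumption.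
    + now replace (sN + 2 * (r * -1)) with (sN - 2 * r) by ring.
    + now replace (r * -1) with (- r) by ring; rewrite Z.divide_opp_r.
  - destruct (cong5_and4 _ _ _ _ _ _ _ _ HS) as (_ & Hb & _ & _).
    exact (divide_50_rotation_case _ (-1) _ _ not_5_m1 Hb).
  - destruct (cong5_and4 _ _ _ _ _ _ _ _ HS') as (_ & Hb & _ & _).
    exact (divide_50_rotation_case _ 1 _ _ not_5_1 Hb).
  - discriminate HM.
Qed.

Lemma g_eq_numerator (M : Mat) : g M = (IZR (multiplier_numerator 3 12 1 3 M) / 5)%R.
Proof.
  unfold g, multiplier_numerator; cbv zeta.
  destruct (isI M); [|destruct (isNegI M); [|destruct (isS M); [|destruct (isNegS M)]]];
    repeat (rewrite plus_IZR || rewrite minus_IZR || rewrite mult_IZR); field.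
Qed.

Lemma f_eq_numerator (M : Mat) : Defs.f M = (IZR (multiplier_numerator 2 3 4 2 M) / 5)%R.
Proof.
  unfold Defs.f, multiplier_numerator; cbv zeta.
  destruct (isI M); [|destruct (isNegI M); [|destruct (isS M); [|destruct (isNegS M)]]];
    repeat (rewrite plus_IZR || rewrite minus_IZR || rewrite mult_IZR); field.
Qed.

Lemma Ker_nu_iff (h : Mat -> R) (sI sN r u k : Z) :
  (forall M, h M = (IZR (multiplier_numerator sI sN r u M) / 5)%R) ->
  (5 | sI + 2 * r) -> (5 | sN - 2 * r) -> ~ (5 | r) -> rel_prime 50 k ->
  forall M, Ker (nu h k) M <-> inGamma M /\ kernel_cond M.
Proof.
  intros Hh HsI HsN Hr Hk M; unfold Ker.
  rewrite (nu_eq_1 h k M _ (Hh M)), divide_mul_rel_prime by exact Hk.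
  split; intros [HM H]; split; try exact HM;
    now apply (multiplier_numerator_divide_50 sI sN r u M HsI HsN Hr HM).
Qed.

Theorem mainTheorem11 (k : Z)
  (hk : (Z.modulo k 10 = 1 \/ Z.modulo k 10 = 9 \/ Z.modulo k 10 = 3 \/ Z.modulo k 10 = 7)%Z) :
  (forall M : Mat,
     Ker (nuG k) M <->
     (inGamma M /\ Z.divide 5 (mb M) /\ Z.divide 5 (mc M) /\
      Z.modulo (Z.div (mb M) 5) 5 = Z.modulo (Z.div (mc M) 5) 5)) /\
  (forall M : Mat, Ker (nuG k) M <-> Ker (nuF k) M).
Proof.
  assert (Hk := rel_prime_50 k hk).
  assert (KG : forall M, Ker (nuG k) M <-> inGamma M /\ kernel_cond M).
  { apply (Ker_nu_iff g 3 12 1 3); [exact g_eq_numerator | now exists 1 | now exists 2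
                                   | intros [q Hq]; lia | exact Hk]. }
  assert (KF : forall M, Ker (nuF k) M <-> inGamma M /\ kernel_cond M).
  { apply (Ker_nu_iff Defs.f 2 3 4 2); [exact f_eq_numerator | now exists 2 | now exists (-1)
                                   | intros [q Hq]; lia | exact Hk]. }
  split; intros M; rewrite KG; [|rewrite KF]; unfold kernel_cond; tauto.
Qed.
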